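(* Let $d\ge2$, let $Q$ be a qplex, and let $r$ be a type-preserving measurement for $Q$ with stretched measurement matrix $R$. Then $R$ is an orthogonal $d^2\times d^2$ matrix with $Rc=c$. Moreover there exist points $s_1,\dots,s_{d^2}\in Q\cap S_{\rm o}$ which are the vertices of a regular simplex and satisfy, for all $i,j$, $$R_{ij}=(d+1)s_i(j)-\frac1d,\qquad Rs_i=e_i,\qquad (Re_i)(j)=s_j(i).$$
   Context: Fix an integer $d\ge 2$. $\langle\cdot,\cdot\rangle$ is the standard inner product on $\mathbb{R}^{d^2}$, $\|\cdot\|$ the Euclidean norm. $\Delta=\{p\in\mathbb{R}^{d^2}: p(i)\ge0,\ \sum_ip(i)=1\}$; $H=\{u\in\mathbb{R}^{d^2}:\sum_i u(i)=1\}$; $c=(1/d^2,\dots,1/d^2)$. For $A\subseteq H$ the polar is $A^*=\{u\in H:\langle u,v\rangle\ge\frac{1}{d(d+1)}\ \forall v\in A\}$. Out-ball $B_{\rm o}=\{u\in H:\|u-c\|\le r_{\rm o}\}$, $r_{\rm o}^2=\frac{d-1}{d^2(d+1)}$, boundary sphere $S_{\rm o}$. Basis distributions $e_k(i)=\frac{1}{d+1}(\delta_{ki}+\frac1d)$. A qplex is a set $Q\subseteq\Delta\cap B_{\rm o}$ with $Q^*=Q$. A measurement (with $d^2$ outcomes) is an array of reals $r(i|j)\ge0$, $i,j\in\{1,\dots,d^2\}$, with $\sum_i r(i|j)=1$ for every $j$. For a qplex $Q$ and $q\in Q$, define $q_r(i)=\sum_j\big[(d+1)q(j)-\frac1d\big]r(i|j)$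 and $Q_r=\{q_r:q\in Q\}$. The measurement is type-preserving for $Q$ if $Q_r$ is a qplex, and $Q$-preserving if $Q_r=Q$. Its stretched measurement matrix is $R_{ij}=(d+1)r(i|j)-\frac1d\sum_k r(i|k)$, so that $q_r=Rq$. Points $s_1,\dots,s_{d^2}$ are vertices of a regular simplex if they are distinct and all pairwise distances $\|s_i-s_j\|$, $i\ne j$, are equal. *)

(* classical reals.  Vectors in R^{d^2} are functions nat -> R,
   only indices 0 .. d*d-1 are meaningful (0-based indexing). *)
From Stdlib Require Import Reals.
Open Scope R_scope.

Fixpoint fsum (n : nat) (f : nat -> R) : R :=
  match n with
  | O => 0
  | S k => fsum k f + f k
  end.

Definition vec := nat -> R.
Definition nsq (d : nat) : nat := (d * d)%nat.
Definition dR (d : nat) : R := INR d.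

Definition inner (d : nat) (u v : vec) : R := fsum (nsq d) (fun i => u i * v i).
Definition dist2 (d : nat) (u v : vec) : R :=
  fsum (nsq d) (fun i => (u i - v i) * (u i - v i)).

Definition inDelta (d : nat) (p : vec) : Prop :=
  (forall i, (i < nsq d)%nat -> 0 <= p i) /\ fsum (nsq d) p = 1.
Definition inH (d : nat) (u : vec) : Prop := fsum (nsq d) u = 1.
Definition cvec (d : nat) : vec := fun _ => 1 / (dR d * dR d).

Definition polar (d : nat) (A : vec -> Prop) : vec -> Prop :=
  fun u => inH d u /\ forall v, A v -> inner d u v >= 1 / (dR d * (dR d + 1)).

Definition ro2 (d : nat) : R := (dR d - 1) / (dR d * dR d * (dR d + 1)).
Definition inBo (d : nat) (u : vec) : Prop := inH d u /\ dist2 d u (cvec d) <= ro2 d.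
Definition inSo (d : nat) (u : vec) : Prop := inH d u /\ dist2 d u (cvec d) = ro2 d.

Definition ebasis (d : nat) (k : nat) : vec :=
  fun i => (1 / (dR d + 1)) * ((if Nat.eqb k i then 1 else 0) + 1 / dR d).

Definition qplex (d : nat) (Q : vec -> Prop) : Prop :=
  (forall q, Q q -> inDelta d q /\ inBo d q) /\
  (forall u, polar d Q u <-> Q u).

(* measurement: r i j = r(i|j) *)
Definition measurement (d : nat) (r : nat -> nat -> R) : Prop :=
  (forall i j, (i < nsq d)%nat -> (j < nsq d)%nat -> 0 <= r i j) /\
  (forall j, (j < nsq d)%nat -> fsum (nsq d) (fun i => r i j) = 1).

Definition qr (d : nat) (r : nat -> nat -> R) (q : vec) : vec :=
  fun i => fsum (nsq d) (fun j => ((dR d + 1) * q j - 1 / dR d) * r i j).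

(* Q_r = { q_r : q in Q }, vectors identified when they agree on indices < d^2 *)
Definition Qr (d : nat) (Q : vec -> Prop) (r : nat -> nat -> R) : vec -> Prop :=
  fun u => exists q, Q q /\ forall i, (i < nsq d)%nat -> u i = qr d r q i.

Definition type_preserving (d : nat) (Q : vec -> Prop) (r : nat -> nat -> R) : Prop :=
  qplex d (Qr d Q r).

Definition Rmat (d : nat) (r : nat -> nat -> R) (i j : nat) : R :=
  (dR d + 1) * r i j - (1 / dR d) * fsum (nsq d) (fun k => r i k).

Definition mxvec (d : nat) (M : nat -> nat -> R) (v : vec) : vec :=
  fun i => fsum (nsq d) (fun j => M i j * v j).

Definition orthogonal (d : nat) (M : nat -> nat -> R) : Prop :=
  forall i j, (i < nsq d)%nat -> (j < nsq d)%nat ->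
    fsum (nsq d) (fun k => M k i * M k j) = if Nat.eqb i j then 1 else 0.

Definition regular_simplex (d : nat) (s : nat -> vec) : Prop :=
  (forall i j, (i < nsq d)%nat -> (j < nsq d)%nat -> i <> j ->
     exists k, (k < nsq d)%nat /\ s i k <> s j k) /\
  (exists delta, forall i j, (i < nsq d)%nat -> (j < nsq d)%nat -> i <> j ->
     sqrt (dist2 d (s i) (s j)) = delta).

From Stdlib Require Import Reals Lra Lia.
From Stdlib Require Import IndefiniteDescription.
Open Scope R_scope.

(* Type preservation puts every basis distribution e_k into Q_r, so e_k = (s_k)_r
   for some s_k in Q; it also puts every column r(.|j) = (e_j)_r into B_o.  The
   s_k and the columns therefore have squared norm at most 2/(d(d+1)), while the
   identity (s_k)_r(k) = e_k(k) fixes the cross terms sum_j s_k(j) r(k|j); together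
   this forces sum_{k,j} (s_k(j) - r(k|j))^2 <= 0, i.e. the rows of r are the s_k.
   The identities (s_i)_r = e_i then give the Gram matrix of the s_k, which says
   exactly that R has orthonormal rows, and everything else follows. *)

Lemma fsum_ext n f g :
  (forall i, (i < n)%nat -> f i = g i) -> fsum n f = fsum n g.
Proof.
  induction n as [|n IH]; simpl; intros H; auto.
  rewrite IH by (intros; apply H; lia). now rewrite H by lia.
Qed.

Lemma fsum_add n f g : fsum n (fun i => f i + g i) = fsum n f + fsum n g.
Proof. induction n; simpl; [lra | rewrite IHn; lra]. Qed.

Lemma fsum_sub n f g : fsum n (fun i => f i - g i) = fsum n f - fsum n g.
Proof. induction n; simpl; [lra | rewrite IHn; lra]. Qed.

Lemma fsum_scal n c f : fsum n (fun i => c * f i) = c * fsum n f.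
Proof. induction n; simpl; [lra | rewrite IHn; lra]. Qed.

Lemma fsum_const n c : fsum n (fun _ => c) = INR n * c.
Proof. induction n; simpl fsum; [simpl; lra | rewrite S_INR, IHn; lra]. Qed.

Lemma fsum_eq0 n f : (forall i, (i < n)%nat -> f i = 0) -> fsum n f = 0.
Proof. intros H. rewrite (fsum_ext n f (fun _ => 0)), fsum_const by auto. lra. Qed.

Lemma fsum_le n f g :
  (forall i, (i < n)%nat -> f i <= g i) -> fsum n f <= fsum n g.
Proof.
  induction n as [|n IH]; simpl; intros H; [lra|].
  assert (f n <= g n) by (apply H; lia).
  assert (fsum n f <= fsum n g) by (apply IH; intros; apply H; lia).
  lra.
Qed.

Lemma fsum_nonneg n f : (forall i, (i < n)%nat -> 0 <= f i) -> 0 <= fsum n f.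
Proof. intros H. rewrite <- (fsum_eq0 n (fun _ => 0)) by auto. now apply fsum_le. Qed.

Lemma fsum_nonneg_eq0 n f :
  (forall i, (i < n)%nat -> 0 <= f i) -> fsum n f = 0 ->
  forall i, (i < n)%nat -> f i = 0.
Proof.
  induction n as [|n IH]; simpl; intros H E i Hi; [lia|].
  assert (0 <= f n) by (apply H; lia).
  assert (0 <= fsum n f) by (apply fsum_nonneg; intros; apply H; lia).
  destruct (Nat.eq_dec i n) as [->|]; [lra|].
  apply IH; [intros; apply H; lia | lra | lia].
Qed.

Lemma fsum_neq0_exists n f : fsum n f <> 0 -> exists i, (i < n)%nat /\ f i <> 0.
Proof.
  induction n as [|n IH]; simpl; intros H; [lra|].
  destruct (Req_dec (f n) 0) as [E|E].
  - destruct IH as [i [Hi Hf]]; [lra|]. exists i; split; [lia | exact Hf].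
  - exists n; split; [lia | exact E].
Qed.

Lemma fsum_kronecker n k f : (k < n)%nat ->
  fsum n (fun i => (if Nat.eqb k i then 1 else 0) * f i) = f k.
Proof.
  induction n as [|n IH]; intros Hk; [lia|]. simpl.
  destruct (Nat.eqb_spec k n) as [->|].
  - rewrite fsum_eq0; [lra|]. intros i Hi. destruct (Nat.eqb_spec n i); [lia | lra].
  - rewrite IH by lia. lra.
Qed.

Lemma fsum_comm n m f :
  fsum n (fun i => fsum m (fun j => f i j)) = fsum m (fun j => fsum n (fun i => f i j)).
Proof.
  induction n as [|n IH]; simpl.
  - symmetry; now apply fsum_eq0.
  - now rewrite IH, <- fsum_add.
Qed.

Lemma fsum_comm3 n f :
  fsum n (fun i => fsum n (fun j => fsum n (fun k => f i j k))) =
  fsum n (fun k => fsum n (fun i => fsum n (fun j => f i j k))).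
Proof.
  rewrite (fsum_comm n n (fun k i => fsum n (fun j => f i j k))).
  apply fsum_ext; intros i _. apply fsum_comm.
Qed.

Lemma fsum_mul_fsum n m f g :
  fsum n f * fsum m g = fsum n (fun i => fsum m (fun j => f i * g j)).
Proof.
  rewrite Rmult_comm, <- fsum_scal. apply fsum_ext; intros.
  rewrite Rmult_comm, <- fsum_scal. apply fsum_ext; intros; ring.
Qed.

Lemma fsum2_sqr_le0 n m (f : nat -> nat -> R) :
  fsum n (fun i => fsum m (fun j => f i j * f i j)) <= 0 ->
  forall i j, (i < n)%nat -> (j < m)%nat -> f i j = 0.
Proof.
  intros H i j Hi Hj.
  assert (Hrow : forall i, 0 <= fsum m (fun j => f i j * f i j))
    by (intros; apply fsum_nonneg; intros; apply Rle_0_sqr).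
  assert (E : fsum n (fun i => fsum m (fun j => f i j * f i j)) = 0)
    by (apply Rle_antisym; [exact H | apply fsum_nonneg; auto]).
  apply Rsqr_0_uniq.
  apply (fsum_nonneg_eq0 m (fun j => f i j * f i j)); auto.
  - intros; apply Rle_0_sqr.
  - apply (fsum_nonneg_eq0 n _ (fun i _ => Hrow i) E i Hi).
Qed.

Lemma fsum_gram_sqr_transpose n (A : nat -> nat -> R) :
  fsum n (fun i => fsum n (fun j =>
    fsum n (fun k => A k i * A k j) * fsum n (fun l => A l i * A l j))) =
  fsum n (fun k => fsum n (fun l =>
    fsum n (fun i => A k i * A l i) * fsum n (fun j => A k j * A l j))).
Proof.
  set (X := fun i j k l => A k i * A k j * (A l i * A l j)).
  transitivity (fsum n (fun i => fsum n (fun j => fsum n (fun k => fsum n (fun l => X i j k l))))).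
  { apply fsum_ext; intros i _. apply fsum_ext; intros j _. apply fsum_mul_fsum. }
  transitivity (fsum n (fun k => fsum n (fun i => fsum n (fun j => fsum n (fun l => X i j k l))))).
  { apply (fsum_comm3 n (fun i j k => fsum n (fun l => X i j k l))). }
  apply fsum_ext; intros k _.
  transitivity (fsum n (fun l => fsum n (fun i => fsum n (fun j => X i j k l)))).
  { apply (fsum_comm3 n (fun i j l => X i j k l)). }
  apply fsum_ext; intros l _. rewrite fsum_mul_fsum.
  apply fsum_ext; intros i _. apply fsum_ext; intros j _. unfold X; ring.
Qed.

(* A A^T = I forces A^T A = I: the squared Frobenius distance from A^T A to I
   equals tr((A A^T)^2) - 2 tr(A A^T) + n = 0. *)
Lemma orthogonal_of_rows_orthonormal n (A : nat -> nat -> R) :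
  (forall k l, (k < n)%nat -> (l < n)%nat ->
     fsum n (fun i => A k i * A l i) = if Nat.eqb k l then 1 else 0) ->
  forall i j, (i < n)%nat -> (j < n)%nat ->
    fsum n (fun k => A k i * A k j) = if Nat.eqb i j then 1 else 0.
Proof.
  intros Hrow.
  set (G := fun i j => fsum n (fun k => A k i * A k j)).
  set (I := fun i j : nat => if Nat.eqb i j then 1 else 0).
  assert (HGG : fsum n (fun i => fsum n (fun j => G i j * G i j)) = INR n).
  { unfold G. rewrite fsum_gram_sqr_transpose.
    rewrite (fsum_ext _ _ (fun k => fsum n (fun l => I k l * I k l))).
    2:{ intros k Hk. apply fsum_ext; intros l Hl. now rewrite !Hrow. }
    rewrite (fsum_ext _ _ (fun _ => 1)), fsum_const; [ring|].
    intros k Hk. unfold I at 1. rewrite fsum_kronecker by auto.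
    unfold I. now rewrite Nat.eqb_refl. }
  assert (HIG : fsum n (fun i => fsum n (fun j => I i j * G i j)) = INR n).
  { rewrite (fsum_ext _ _ (fun i => G i i)) by (intros; now apply fsum_kronecker).
    unfold G. rewrite (fsum_comm _ _ (fun i k => A k i * A k i)).
    rewrite (fsum_ext _ _ (fun _ => 1)), fsum_const; [ring|].
    intros k Hk. now rewrite Hrow, Nat.eqb_refl. }
  assert (HII : fsum n (fun i => fsum n (fun j => I i j * I i j)) = INR n).
  { rewrite (fsum_ext _ _ (fun _ => 1)), fsum_const; [ring|].
    intros i Hi. unfold I at 1. rewrite fsum_kronecker by auto.
    unfold I. now rewrite Nat.eqb_refl. }
  intros i j Hi Hj.
  enough (G i j - I i j = 0) by (unfold G, I in *; lra).
  revert i j Hi Hj. apply fsum2_sqr_le0, Req_le.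
  rewrite (fsum_ext _ _ (fun i => fsum n (fun j => G i j * G i j)
      + (-2) * fsum n (fun j => I i j * G i j) + fsum n (fun j => I i j * I i j))).
  2:{ intros i _. rewrite <- fsum_scal, <- !fsum_add. apply fsum_ext; intros; ring. }
  rewrite !fsum_add, fsum_scal, HGG, HIG, HII. ring.
Qed.

Lemma dR_ge2 d : (2 <= d)%nat -> 2 <= dR d.
Proof. intros. unfold dR. replace 2 with (INR 2) by (simpl; lra). apply le_INR; lia. Qed.

Lemma INR_nsq d : INR (nsq d) = dR d * dR d.
Proof. apply mult_INR. Qed.

Lemma ebasis_sum d k : (2 <= d)%nat -> (k < nsq d)%nat -> fsum (nsq d) (ebasis d k) = 1.
Proof.
  intros Hd Hk. pose proof (dR_ge2 d Hd). unfold ebasis.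
  rewrite (fsum_ext _ _ (fun i => 1 / (dR d + 1) * ((if Nat.eqb k i then 1 else 0) * 1)
                                  + 1 / (dR d * (dR d + 1)))) by (intros; field; lra).
  rewrite fsum_add, fsum_scal, fsum_kronecker, fsum_const, INR_nsq by auto.
  field; lra.
Qed.

Lemma inner_ebasis d k v : (2 <= d)%nat -> (k < nsq d)%nat ->
  inner d (ebasis d k) v = 1 / (dR d + 1) * v k + 1 / (dR d * (dR d + 1)) * fsum (nsq d) v.
Proof.
  intros Hd Hk. pose proof (dR_ge2 d Hd). unfold inner, ebasis.
  rewrite (fsum_ext _ _ (fun i => 1 / (dR d + 1) * ((if Nat.eqb k i then 1 else 0) * v i)
                                  + 1 / (dR d * (dR d + 1)) * v i)) by (intros; field; lra).
  now rewrite fsum_add, !fsum_scal, fsum_kronecker.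
Qed.

(* e_k is in the polar of the whole simplex, hence of any subset of it. *)
Lemma qplex_ebasis d Q k : (2 <= d)%nat -> qplex d Q -> (k < nsq d)%nat -> Q (ebasis d k).
Proof.
  intros Hd [HQ Hpolar] Hk. pose proof (dR_ge2 d Hd). apply Hpolar. split.
  - now apply ebasis_sum.
  - intros v Hv. destruct (HQ v Hv) as [[Hpos Hsum] _].
    rewrite inner_ebasis, Hsum by auto.
    assert (0 <= 1 / (dR d + 1) * v k)
      by (apply Rmult_le_pos; [apply Rlt_le, Rdiv_lt_0_compat; lra | auto]).
    lra.
Qed.

Lemma qr_expand d r q i : qr d r q i =
  (dR d + 1) * fsum (nsq d) (fun j => q j * r i j) - 1 / dR d * fsum (nsq d) (fun j => r i j).
Proof. unfold qr. rewrite <- !fsum_scal, <- fsum_sub. apply fsum_ext; intros; ring. Qed.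

Lemma qr_ebasis d r k i : (2 <= d)%nat -> (k < nsq d)%nat -> qr d r (ebasis d k) i = r i k.
Proof.
  intros Hd Hk. pose proof (dR_ge2 d Hd). unfold qr, ebasis.
  rewrite (fsum_ext _ _ (fun j => (if Nat.eqb k j then 1 else 0) * r i j)) by (intros; field; lra).
  now apply fsum_kronecker.
Qed.

Lemma dist2_cvec d u : (2 <= d)%nat -> inH d u ->
  dist2 d u (cvec d) = fsum (nsq d) (fun i => u i * u i) - 1 / (dR d * dR d).
Proof.
  intros Hd Hu. pose proof (dR_ge2 d Hd). unfold dist2, cvec.
  rewrite (fsum_ext _ _ (fun i => u i * u i + (-2 / (dR d * dR d)) * u i
                                  + 1 / (dR d * dR d) * (1 / (dR d * dR d)))) by (intros; field; lra).
  rewrite !fsum_add, fsum_scal, fsum_const, INR_nsq, Hu. field; lra.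
Qed.

Lemma inBo_sqnorm_le d u : (2 <= d)%nat -> inBo d u ->
  fsum (nsq d) (fun i => u i * u i) <= 2 / (dR d * (dR d + 1)).
Proof.
  intros Hd [Hu Hb]. pose proof (dR_ge2 d Hd).
  rewrite dist2_cvec in Hb by auto. unfold ro2 in Hb.
  replace (2 / (dR d * (dR d + 1)))
    with ((dR d - 1) / (dR d * dR d * (dR d + 1)) + 1 / (dR d * dR d)) by (field; lra).
  lra.
Qed.

Section TypePreserving.

Variables (d : nat) (Q : vec -> Prop) (r : nat -> nat -> R).
Hypotheses (Hd : (2 <= d)%nat) (HQ : qplex d Q)
  (Hr : measurement d r) (Htp : type_preserving d Q r).

Lemma measurement_column_sqnorm_le j : (j < nsq d)%nat ->
  fsum (nsq d) (fun i => r i j * r i j) <= 2 / (dR d * (dR d + 1)).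
Proof.
  intros Hj. apply (inBo_sqnorm_le d (fun i => r i j) Hd).
  apply (proj1 Htp). exists (ebasis d j). split.
  - now apply qplex_ebasis.
  - intros i Hi. now rewrite qr_ebasis.
Qed.

Lemma ebasis_preimages : exists s : nat -> vec, forall k, (k < nsq d)%nat ->
  Q (s k) /\ forall i, (i < nsq d)%nat -> qr d r (s k) i = ebasis d k i.
Proof.
  assert (Hex : forall k, exists q, (k < nsq d)%nat ->
    Q q /\ forall i, (i < nsq d)%nat -> qr d r q i = ebasis d k i).
  { intros k. destruct (Nat.lt_ge_cases k (nsq d)) as [Hk|Hk].
    - destruct (qplex_ebasis d _ k Hd Htp Hk) as [q [Hq Hqi]].
      exists q. intros _. split; [exact Hq | intros i Hi; symmetry; auto].
    - exists (fun _ => 0). lia. }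
  destruct (functional_choice _ Hex) as [s Hs]. now exists s.
Qed.

Variable s : nat -> vec.
Hypothesis Hs : forall k, (k < nsq d)%nat ->
  Q (s k) /\ forall i, (i < nsq d)%nat -> qr d r (s k) i = ebasis d k i.

Lemma preimage_sum k : (k < nsq d)%nat -> fsum (nsq d) (s k) = 1.
Proof. intros Hk. exact (proj2 (proj1 (proj1 HQ _ (proj1 (Hs k Hk))))). Qed.

Lemma preimage_cross k : (k < nsq d)%nat ->
  fsum (nsq d) (fun j => s k j * r k j) = (1 + fsum (nsq d) (fun j => r k j)) / (dR d * (dR d + 1)).
Proof.
  intros Hk. pose proof (dR_ge2 d Hd).
  pose proof (proj2 (Hs k Hk) k Hk) as E.
  rewrite qr_expand in E. unfold ebasis in E. rewrite Nat.eqb_refl in E.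
  apply (Rmult_eq_reg_l (dR d + 1)); [|lra].
  replace ((dR d + 1) * ((1 + fsum (nsq d) (fun j => r k j)) / (dR d * (dR d + 1))))
    with (1 / (dR d + 1) * (1 + 1 / dR d) + 1 / dR d * fsum (nsq d) (fun j => r k j))
    by (field; lra).
  lra.
Qed.

Lemma preimage_cross_total :
  fsum (nsq d) (fun k => fsum (nsq d) (fun j => s k j * r k j)) = 2 * dR d / (dR d + 1).
Proof.
  pose proof (dR_ge2 d Hd).
  assert (Htotal : fsum (nsq d) (fun k => fsum (nsq d) (fun j => r k j)) = dR d * dR d).
  { rewrite fsum_comm, (fsum_ext _ _ (fun _ => 1)), fsum_const, INR_nsq by (apply (proj2 Hr)).
    ring. }
  rewrite (fsum_ext _ _ _ preimage_cross).
  unfold Rdiv. rewrite (fsum_ext _ _ (fun k => 1 * / (dR d * (dR d + 1))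
                 + / (dR d * (dR d + 1)) * fsum (nsq d) (fun j => r k j))) by (intros; ring).
  rewrite fsum_add, fsum_const, fsum_scal, Htotal, INR_nsq. field; lra.
Qed.

Lemma preimage_eq_row k j : (k < nsq d)%nat -> (j < nsq d)%nat -> s k j = r k j.
Proof.
  intros Hk Hj. pose proof (dR_ge2 d Hd).
  enough (s k j - r k j = 0) by lra.
  revert k j Hk Hj. apply fsum2_sqr_le0.
  rewrite (fsum_ext _ _ (fun k => fsum (nsq d) (fun j => s k j * s k j)
      + (-2) * fsum (nsq d) (fun j => s k j * r k j) + fsum (nsq d) (fun j => r k j * r k j))).
  2:{ intros k _. rewrite <- fsum_scal, <- !fsum_add. apply fsum_ext; intros; ring. }
  rewrite !fsum_add, fsum_scal, preimage_cross_total, (fsum_comm _ _ (fun k j => r k j * r k j)).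
  assert (Hrows : fsum (nsq d) (fun k => fsum (nsq d) (fun j => s k j * s k j))
                  <= fsum (nsq d) (fun _ => 2 / (dR d * (dR d + 1)))).
  { apply fsum_le. intros k Hk. apply inBo_sqnorm_le; auto.
    apply (proj2 (proj1 HQ _ (proj1 (Hs k Hk)))). }
  assert (Hcols : fsum (nsq d) (fun j => fsum (nsq d) (fun k => r k j * r k j))
                  <= fsum (nsq d) (fun _ => 2 / (dR d * (dR d + 1))))
    by (apply fsum_le; apply measurement_column_sqnorm_le).
  rewrite fsum_const, INR_nsq in Hrows, Hcols.
  replace (2 * dR d / (dR d + 1)) with (dR d * dR d * (2 / (dR d * (dR d + 1)))) by (field; lra).
  lra.
Qed.

Lemma measurement_row_sum k : (k < nsq d)%nat -> fsum (nsq d) (fun j => r k j) = 1.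
Proof.
  intros Hk. rewrite <- (preimage_sum k Hk).
  apply fsum_ext; intros; symmetry; now apply preimage_eq_row.
Qed.

Lemma Rmat_preimage i j : (i < nsq d)%nat -> (j < nsq d)%nat ->
  Rmat d r i j = (dR d + 1) * s i j - 1 / dR d.
Proof. intros Hi Hj. unfold Rmat. rewrite measurement_row_sum, preimage_eq_row by auto. ring. Qed.

Lemma preimage_inner i j : (i < nsq d)%nat -> (j < nsq d)%nat ->
  fsum (nsq d) (fun l => s i l * s j l) = (ebasis d i j + 1 / dR d) / (dR d + 1).
Proof.
  intros Hi Hj. pose proof (dR_ge2 d Hd).
  rewrite <- (proj2 (Hs i Hi) j Hj), qr_expand, measurement_row_sum by auto.
  rewrite (fsum_ext _ (fun l => s i l * s j l) (fun l => s i l * r j l))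
    by (intros l Hl; now rewrite (preimage_eq_row j l Hj Hl)).
  field; lra.
Qed.

Lemma Rmat_mul_preimage i j : (i < nsq d)%nat -> (j < nsq d)%nat ->
  mxvec d (Rmat d r) (s i) j = ebasis d i j.
Proof.
  intros Hi Hj. pose proof (dR_ge2 d Hd). unfold mxvec.
  rewrite (fsum_ext _ _ (fun l => (dR d + 1) * (s i l * s j l) + (-1 / dR d) * s i l)).
  2:{ intros l Hl. rewrite Rmat_preimage by auto. field; lra. }
  rewrite fsum_add, !fsum_scal, preimage_inner, preimage_sum by auto.
  field; lra.
Qed.

Lemma Rmat_rows_orthonormal k l : (k < nsq d)%nat -> (l < nsq d)%nat ->
  fsum (nsq d) (fun i => Rmat d r k i * Rmat d r l i) = if Nat.eqb k l then 1 else 0.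
Proof.
  intros Hk Hl. pose proof (dR_ge2 d Hd).
  rewrite (fsum_ext _ _ (fun i => (dR d + 1) * (dR d + 1) * (s k i * s l i)
      + (-(dR d + 1) / dR d) * s k i + (-(dR d + 1) / dR d) * s l i + 1 / (dR d * dR d))).
  2:{ intros i Hi. rewrite !Rmat_preimage by auto. field; lra. }
  rewrite !fsum_add, !fsum_scal, fsum_const, INR_nsq, preimage_inner, !preimage_sum by auto.
  unfold ebasis. field; lra.
Qed.

Lemma Rmat_orthogonal : orthogonal d (Rmat d r).
Proof. intros i j. apply orthogonal_of_rows_orthonormal, Rmat_rows_orthonormal. Qed.

Lemma Rmat_mul_cvec i : (i < nsq d)%nat -> mxvec d (Rmat d r) (cvec d) i = cvec d i.
Proof.
  intros Hi. pose proof (dR_ge2 d Hd). unfold mxvec, cvec.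
  rewrite (fsum_ext _ _ (fun l => (dR d + 1) / (dR d * dR d) * s i l + (-1 / (dR d * dR d * dR d)))).
  2:{ intros l Hl. rewrite Rmat_preimage by auto. field; lra. }
  rewrite fsum_add, fsum_scal, fsum_const, INR_nsq, preimage_sum by auto.
  field; lra.
Qed.

Lemma Rmat_mul_ebasis i j : (i < nsq d)%nat -> (j < nsq d)%nat ->
  mxvec d (Rmat d r) (ebasis d i) j = s j i.
Proof.
  intros Hi Hj. pose proof (dR_ge2 d Hd). unfold mxvec.
  rewrite (fsum_ext _ _ (fun l => (if Nat.eqb i l then 1 else 0) * (s j l - 1 / (dR d * (dR d + 1)))
      + (1 / dR d * s j l + (-1 / (dR d * dR d * (dR d + 1)))))).
  2:{ intros l Hl. rewrite Rmat_preimage by auto. unfold ebasis. field; lra. }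
  rewrite fsum_add, fsum_kronecker, fsum_add, fsum_scal, fsum_const, INR_nsq, preimage_sum by auto.
  field; lra.
Qed.

Lemma preimage_on_sphere i : (i < nsq d)%nat -> inSo d (s i).
Proof.
  intros Hi. pose proof (dR_ge2 d Hd).
  assert (Hsum := preimage_sum i Hi).
  split; [exact Hsum|].
  rewrite dist2_cvec, preimage_inner by auto.
  unfold ebasis, ro2. rewrite Nat.eqb_refl. field; lra.
Qed.

Lemma preimage_dist2 i j : (i < nsq d)%nat -> (j < nsq d)%nat -> i <> j ->
  dist2 d (s i) (s j) = 2 / ((dR d + 1) * (dR d + 1)).
Proof.
  intros Hi Hj Hij. pose proof (dR_ge2 d Hd). unfold dist2.
  rewrite (fsum_ext _ _ (fun l => s i l * s i l + (-2) * (s i l * s j l) + s j l * s j l))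
    by (intros; ring).
  rewrite !fsum_add, fsum_scal, !preimage_inner by auto.
  unfold ebasis. rewrite !Nat.eqb_refl. destruct (Nat.eqb_spec i j); [lia|].
  field; lra.
Qed.

Lemma preimage_regular_simplex : regular_simplex d s.
Proof.
  pose proof (dR_ge2 d Hd). split.
  - intros i j Hi Hj Hij.
    destruct (fsum_neq0_exists (nsq d) (fun l => (s i l - s j l) * (s i l - s j l))) as [k [Hk Hne]].
    + change (dist2 d (s i) (s j) <> 0). rewrite preimage_dist2 by auto.
      apply Rgt_not_eq, Rdiv_lt_0_compat; nra.
    + exists k. split; [exact Hk|]. intros E. apply Hne. rewrite E. ring.
  - exists (sqrt (2 / ((dR d + 1) * (dR d + 1)))). intros i j Hi Hj Hij.
    now rewrite preimage_dist2.
Qed.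

End TypePreserving.

Theorem mainTheorem10 (d : nat) (Hd : (2 <= d)%nat)
  (Q : vec -> Prop) (HQ : qplex d Q)
  (r : nat -> nat -> R) (Hr : measurement d r) (Htp : type_preserving d Q r) :
  orthogonal d (Rmat d r) /\
  (forall i, (i < nsq d)%nat -> mxvec d (Rmat d r) (cvec d) i = cvec d i) /\
  exists s : nat -> vec,
    (forall i, (i < nsq d)%nat -> Q (s i) /\ inSo d (s i)) /\
    regular_simplex d s /\
    (forall i j, (i < nsq d)%nat -> (j < nsq d)%nat ->
       Rmat d r i j = (dR d + 1) * s i j - 1 / dR d /\
       mxvec d (Rmat d r) (s i) j = ebasis d i j /\
       mxvec d (Rmat d r) (ebasis d i) j = s j i).
Proof.
  destruct (ebasis_preimages d Q r Hd Htp) as [s Hs].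
  split; [exact (Rmat_orthogonal d Q r Hd HQ Hr Htp s Hs)|].
  split; [exact (Rmat_mul_cvec d Q r Hd HQ Hr Htp s Hs)|].
  exists s. split; [|split].
  - intros i Hi. split; [apply Hs; exact Hi|].
    exact (preimage_on_sphere d Q r Hd HQ Hr Htp s Hs i Hi).
  - exact (preimage_regular_simplex d Q r Hd HQ Hr Htp s Hs).
  - intros i j Hi Hj. repeat split.
    + exact (Rmat_preimage d Q r Hd HQ Hr Htp s Hs i j Hi Hj).
    + exact (Rmat_mul_preimage d Q r Hd HQ Hr Htp s Hs i j Hi Hj).
    + exact (Rmat_mul_ebasis d Q r Hd HQ Hr Htp s Hs i j Hi Hj).
Qed.
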